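(* Let $\alpha\ge0$, $0\le\beta<1$, and let $f=h+\overline{g}\in\mathcal{W}_{\mathcal{H}}^0(\alpha,\beta)$ with $h(z)=z+\sum_{n\ge2}a_nz^n$, $g(z)=\sum_{n\ge2}b_nz^n$. Then for every $n\ge2$: (i) $|a_n|+|b_n|\le\dfrac{2(1-\beta)}{n(1+\alpha(n-1))}$; (ii) $\big||a_n|-|b_n|\big|\le\dfrac{2(1-\beta)}{n(1+\alpha(n-1))}$; (iii) $|a_n|\le\dfrac{2(1-\beta)}{n(1+\alpha(n-1))}$.
   Context: Let $\mathbb{D}=\{z\in\mathbb{C}:|z|<1\}$. $\mathcal{H}^0$ denotes the class of harmonic maps $f=h+\overline{g}$ on $\mathbb{D}$, with $h,g$ analytic in $\mathbb{D}$, $h(z)=z+\sum_{n\ge2}a_nz^n$ and $g(z)=\sum_{n\ge2}b_nz^n$. For $\alpha\ge0$, $0\le\beta<1$, $\mathcal{W}_{\mathcal{H}}^0(\alpha,\beta)$ denotes the class of $f=h+\overline{g}\in\mathcal{H}^0$ such that $\Re\big(h'(z)+\alpha zh''(z)-\beta\big)>|g'(z)+\alpha zg''(z)|$ for all $z\in\mathbb{D}$. *)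

From Stdlib Require Import Reals Lra.
Open Scope R_scope.

Definition Cplx : Type := (R * R)%type.
Definition Cre (z : Cplx) : R := fst z.
Definition Cim (z : Cplx) : R := snd z.
Definition RtoC (x : R) : Cplx := (x, 0).
Definition Cadd (z w : Cplx) : Cplx := (fst z + fst w, snd z + snd w).
Definition Csub (z w : Cplx) : Cplx := (fst z - fst w, snd z - snd w).
Definition Cmul (z w : Cplx) : Cplx :=
  (fst z * fst w - snd z * snd w, fst z * snd w + snd z * fst w).
Definition Cnorm (z : Cplx) : R := sqrt (fst z * fst z + snd z * snd z).
Fixpoint Cpow (z : Cplx) (n : nat) : Cplx :=
  match n with O => (1, 0) | S m => Cmul z (Cpow z m) end.

Fixpoint Cpsum (c : nat -> Cplx) (z : Cplx) (N : nat) : Cplx :=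
  match N with O => (0, 0) | S M => Cadd (Cpsum c z M) (Cmul (c M) (Cpow z M)) end.

Definition Cseries (c : nat -> Cplx) (z l : Cplx) : Prop :=
  forall eps, eps > 0 -> exists N0 : nat, forall N, (N >= N0)%nat ->
    Cnorm (Csub (Cpsum c z N) l) < eps.

Definition cderiv (f : Cplx -> Cplx) (z l : Cplx) : Prop :=
  forall eps, eps > 0 -> exists del, del > 0 /\ forall w,
    0 < Cnorm (Csub w z) < del ->
    Cnorm (Csub (Csub (f w) (f z)) (Cmul l (Csub w z))) <= eps * Cnorm (Csub w z).

Definition inD (z : Cplx) : Prop := Cnorm z < 1.

(* f = h + conj g is in W_H^0(alpha,beta), where the normalisations of h,g
   are given by their Taylor coefficients a, b (separately in the theorem). *)
Definition W_H0 (alpha beta : R) (h g : Cplx -> Cplx) : Prop :=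
  exists h1 h2 g1 g2 : Cplx -> Cplx,
    forall z, inD z ->
      cderiv h z (h1 z) /\ cderiv h1 z (h2 z) /\
      cderiv g z (g1 z) /\ cderiv g1 z (g2 z) /\
      Cre (Cadd (h1 z) (Cmul (RtoC alpha) (Cmul z (h2 z)))) - beta >
        Cnorm (Cadd (g1 z) (Cmul (RtoC alpha) (Cmul z (g2 z)))).

(* For |u| = 1 the function q = h' + alpha z h'' + u (g' + alpha z g'') - beta has positive
   real part on the disc, because Re (h' + alpha z h'') - beta > |g' + alpha z g''|.  Its
   constant term is 1 - beta and its (n-1)-th Taylor coefficient is
   n (1 + alpha (n - 1)) (a_n + u b_n).  Caratheodory's bound |c_k| <= 2 Re c_0 for functions
   of positive real part, with u chosen so that u b_n points in the direction of a_n, gives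
   n (1 + alpha (n - 1)) (|a_n| + |b_n|) <= 2 (1 - beta), whence (i), (ii) and (iii).

   Caratheodory's bound is proved without integrals: averaging 2 Re q over M equally spaced
   points of the circle of radius r, against the character zeta^(-k j), recovers M c_k r^k
   up to aliasing terms that vanish as M grows; then r tends to 1.  The Taylor series of
   h', h'' (and g', g'') are obtained by differentiating the series of h term by term, which
   is justified directly from the definition of the complex derivative. *)

From Pilot Require Import Defs.
From Stdlib Require Import Reals Lra Lia.
From Coquelicot Require Import Complex.
Open Scope R_scope.

Lemma Re_bounds (c : C) : - Cmod c <= Re c <= Cmod c.
Proof. pose proof (re_le_Cmod c). unfold Rabs in *. destruct Rcase_abs; lra. Qed.

Lemma Cmod_sub_le x y : Cmod (x - y)%C <= Cmod x + Cmod y.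
Proof. unfold Cminus. rewrite <- (Cmod_opp y). apply Cmod_triangle. Qed.

Lemma Cmod_le_add_sub x y : Cmod y <= Cmod x + Cmod (x - y)%C.
Proof. replace y with (x - (x - y))%C at 1 by ring. apply Cmod_sub_le. Qed.

Lemma Re_ge_of_near x y eps : Cmod (x - y)%C < eps -> 0 < Re y -> - eps <= Re x.
Proof.
  intros Hxy Hy. pose proof (Re_bounds (x - y)%C) as H.
  replace (Re (x - y)%C) with (Re x - Re y) in H by (unfold Re, Cminus, Cplus, Copp; simpl; ring).
  lra.
Qed.

Lemma Cmod_Cnorm (z : C) : Cnorm z = Cmod z.
Proof. unfold Cnorm, Cmod. f_equal. simpl. ring. Qed.

Lemma Cconj_RtoC x : Cconj (RtoC x) = RtoC x.
Proof. apply injective_projections; simpl; ring. Qed.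

Lemma Cplus_conj_Re s : (s + Cconj s)%C = RtoC (2 * Re s).
Proof. destruct s as [x y]. unfold Cplus, Cconj, Re, RtoC. simpl. f_equal; ring. Qed.

Section FiniteSums.
Local Open Scope C_scope.

Fixpoint csum (f : nat -> C) (n : nat) : C :=
  match n with O => 0 | S m => csum f m + f m end.
Fixpoint rsum (f : nat -> R) (n : nat) : R :=
  match n with O => 0%R | S m => (rsum f m + f m)%R end.

Lemma csum_ext f g n : (forall i, (i < n)%nat -> f i = g i) -> csum f n = csum g n.
Proof. induction n; intros H; simpl; [reflexivity|]. rewrite IHn, H; auto. Qed.

Lemma csum_plus f g n : csum (fun i => f i + g i) n = csum f n + csum g n.
Proof. induction n; simpl; [ring|]. rewrite IHn. ring. Qed.

Lemma csum_minus f g n : csum (fun i => f i - g i) n = csum f n - csum g n.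
Proof. induction n; simpl; [ring|]. rewrite IHn. ring. Qed.

Lemma csum_scal a f n : csum (fun i => a * f i) n = a * csum f n.
Proof. induction n; simpl; [ring|]. rewrite IHn. ring. Qed.

Lemma csum_shift f n : csum f (S n) = f O + csum (fun i => f (S i)) n.
Proof. induction n; simpl in *; [ring|]. rewrite IHn. ring. Qed.

Lemma csum_swap (F : nat -> nat -> C) n m :
  csum (fun i => csum (F i) m) n = csum (fun j => csum (fun i => F i j) n) m.
Proof.
  induction n; simpl.
  - induction m; simpl; [reflexivity|]. rewrite <- IHm. ring.
  - rewrite IHn, <- csum_plus. reflexivity.
Qed.

Lemma csum_conj f n : Cconj (csum f n) = csum (fun i => Cconj (f i)) n.
Proof.
  induction n; simpl.
  - apply injective_projections; simpl; ring.
  - rewrite Cplus_conj, IHn. reflexivity.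
Qed.

Lemma csum_geometric x n : (x - 1) * csum (fun j => x ^ j) n = x ^ n - 1.
Proof. induction n; simpl; [ring|]. rewrite Cmult_plus_distr_l, IHn. ring. Qed.

Lemma csum_delta (a : C) k n :
  (k < n)%nat -> csum (fun m => if Nat.eqb m k then a else 0) n = a.
Proof.
  induction n; intros Hk; [lia|]. simpl csum.
  destruct (Nat.eq_dec k n) as [<-|Hne].
  - rewrite Nat.eqb_refl, (csum_ext _ (fun _ => 0)).
    + assert (Z : forall j, csum (fun _ => 0) j = 0).
      { induction j; simpl; [reflexivity|]. rewrite IHj. ring. }
      rewrite Z. ring.
    + intros i Hi. destruct (Nat.eqb_spec i k); [lia | reflexivity].
  - rewrite IHn by lia. destruct (Nat.eqb_spec n k); [lia | ring].
Qed.

Lemma Re_csum f n : Re (csum f n) = rsum (fun i => Re (f i)) n.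
Proof. induction n; simpl; [reflexivity|]. rewrite <- IHn. reflexivity. Qed.

Lemma Cmod_csum f n : (Cmod (csum f n) <= rsum (fun i => Cmod (f i)) n)%R.
Proof.
  induction n; simpl.
  - rewrite Cmod_0. lra.
  - eapply Rle_trans; [apply Cmod_triangle | lra].
Qed.

End FiniteSums.

Lemma rsum_le f g n : (forall i, (i < n)%nat -> f i <= g i) -> rsum f n <= rsum g n.
Proof.
  induction n; intros H; simpl; [lra|].
  assert (f n <= g n) by (apply H; lia).
  assert (rsum f n <= rsum g n) by (apply IHn; intros; apply H; lia). lra.
Qed.

Lemma rsum_plus f g n : rsum (fun i => f i + g i) n = rsum f n + rsum g n.
Proof. induction n; simpl; [ring|]. rewrite IHn. ring. Qed.

Lemma rsum_scal a f n : rsum (fun i => a * f i) n = a * rsum f n.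
Proof. induction n; simpl; [ring|]. rewrite IHn. ring. Qed.

Lemma rsum_const c n : rsum (fun _ => c) n = INR n * c.
Proof. induction n; simpl rsum; [simpl; ring|]. rewrite IHn, S_INR. ring. Qed.

Lemma rsum_delta0 c n : (0 < n)%nat -> rsum (fun m => if Nat.eqb m 0 then c else 0) n = c.
Proof.
  induction n; intros Hn; [lia|]. simpl rsum.
  destruct n; [simpl; ring|]. rewrite IHn by lia. simpl. ring.
Qed.

Lemma rsum_geom t n : 0 <= t < 1 -> rsum (fun i => t ^ i) n <= / (1 - t).
Proof.
  intros Ht.
  assert (E : (1 - t) * rsum (fun i => t ^ i) n = 1 - t ^ n).
  { induction n; simpl; [ring|]. rewrite Rmult_plus_distr_l, IHn. ring. }
  assert (0 <= t ^ n) by (apply pow_le; lra).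
  apply (Rmult_le_reg_l (1 - t)); [lra|]. rewrite E, Rinv_r by lra. lra.
Qed.

Lemma rsum_geom_tail K t L n : 0 <= K -> 0 <= t < 1 ->
  rsum (fun i => if Nat.leb L i then K * t ^ i else 0) n <= K * (t ^ L / (1 - t)).
Proof.
  intros HK Ht.
  assert (E : forall n, (1 - t) * rsum (fun i => if Nat.leb L i then K * t ^ i else 0) n
                        = K * (t ^ L - t ^ Nat.max L n)).
  { induction n0; simpl.
    - rewrite Nat.max_0_r. ring.
    - rewrite Rmult_plus_distr_l, IHn0. destruct (Nat.leb_spec L n0).
      + rewrite !Nat.max_r by lia. simpl. ring.
      + rewrite !Nat.max_l by lia. ring. }
  assert (0 <= K * t ^ Nat.max L n) by (apply Rmult_le_pos; [lra | apply pow_le; lra]).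
  apply (Rmult_le_reg_l (1 - t)); [lra|]. rewrite E.
  replace ((1 - t) * (K * (t ^ L / (1 - t)))) with (K * t ^ L) by (field; lra). lra.
Qed.

Lemma bounded_initial_segment (u : nat -> R) N : exists B, forall n, (n < N)%nat -> u n <= B.
Proof.
  induction N as [|N [B HB]]; [exists 0; intros; lia|].
  exists (Rmax B (u N)). intros n Hn.
  destruct (Nat.eq_dec n N) as [->|]; [apply Rmax_r|].
  eapply Rle_trans; [apply HB; lia | apply Rmax_l].
Qed.

Lemma Rdiv_unit_interval a b : 0 <= a < b -> 0 <= a / b < 1.
Proof.
  intros Hab. split.
  - apply Rmult_le_pos; [lra | apply Rlt_le, Rinv_0_lt_compat; lra].
  - apply (Rmult_lt_reg_r b); [lra|]. unfold Rdiv.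
    rewrite Rmult_assoc, Rinv_l, Rmult_1_r by lra. lra.
Qed.

Lemma bernoulli_ineq u n : -1 <= u -> 1 + INR n * u <= (1 + u) ^ n.
Proof.
  intros Hu. induction n; [simpl; lra|].
  rewrite S_INR. simpl. pose proof (pos_INR n).
  assert (0 <= INR n * u * u) by (rewrite Rmult_assoc; apply Rmult_le_pos; [lra | apply Rle_0_sqr]).
  assert ((1 + u) * (1 + INR n * u) <= (1 + u) * (1 + u) ^ n) by (apply Rmult_le_compat_l; lra).
  nra.
Qed.

Lemma nat_mul_pow_bounded t : 0 <= t < 1 -> forall n, INR n * t ^ n <= / (1 - t).
Proof.
  intros Ht n.
  (* with u := 1 - t we have (1 + u) t <= 1 and n u t^n <= ((1 + u) t)^n *)
  pose proof (bernoulli_ineq (1 - t) n ltac:(lra)) as Hb.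
  assert (Hpow : ((1 + (1 - t)) * t) ^ n <= 1) by (rewrite <- (pow1 n) at 3; apply pow_incr; split; nra).
  rewrite Rpow_mult_distr in Hpow.
  assert (0 <= t ^ n) by (apply pow_le; lra).
  assert ((1 + INR n * (1 - t)) * t ^ n <= (1 + (1 - t)) ^ n * t ^ n)
    by (apply Rmult_le_compat_r; assumption).
  apply (Rmult_le_reg_l (1 - t)); [lra|]. rewrite Rinv_r by lra. nra.
Qed.

Lemma nat_sq_mul_pow_geometric t : 0 <= t < 1 ->
  exists B s, 0 <= s < 1 /\ forall n, INR n ^ 2 * t ^ n <= B * s ^ n.
Proof.
  intros Ht. set (s := (1 + t) / 2). set (u := sqrt (t / s)).
  assert (Hs : 0 < s) by (unfold s; lra).
  assert (Hts : 0 <= t / s < 1) by (apply Rdiv_unit_interval; unfold s; lra).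
  assert (Hu : 0 <= u < 1).
  { unfold u. split; [apply sqrt_pos|]. rewrite <- sqrt_1. apply sqrt_lt_1; lra. }
  exists ((/ (1 - u)) ^ 2), s. split; [unfold s; lra|]. intros n.
  pose proof (nat_mul_pow_bounded u Hu n).
  assert (0 <= INR n * u ^ n) by (apply Rmult_le_pos; [apply pos_INR | apply pow_le; lra]).
  assert (E : t ^ n = (u ^ n) ^ 2 * s ^ n).
  { rewrite <- pow_mult, Nat.mul_comm, pow_mult. unfold u. rewrite pow2_sqrt by lra.
    rewrite <- Rpow_mult_distr. f_equal. field. lra. }
  rewrite E, <- Rmult_assoc, <- Rpow_mult_distr.
  apply Rmult_le_compat_r; [apply pow_le; lra|]. apply pow_incr. lra.
Qed.

Lemma le_of_forall_pow_mul_le X Y k : 0 <= X ->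
  (forall r, 0 < r < 1 -> X * r ^ k <= Y) -> X <= Y.
Proof.
  intros HX H. apply Rle_plus_epsilon. intros eps Heps.
  pose proof (pos_INR k).
  set (s := Rmin (1 / 2) (eps / (X * INR k + 1))).
  assert (Hs : 0 < s <= 1 / 2).
  { split; [apply Rmin_pos; [lra | apply Rdiv_lt_0_compat; nra] | apply Rmin_l]. }
  assert (Hks : X * INR k * s <= eps).
  { apply Rle_trans with (X * INR k * (eps / (X * INR k + 1))).
    - apply Rmult_le_compat_l; [nra | apply Rmin_r].
    - apply (Rmult_le_reg_r (X * INR k + 1)); [nra|].
      replace (X * INR k * (eps / (X * INR k + 1)) * (X * INR k + 1)) with (X * INR k * eps)
        by (field; nra).
      nra. }
  pose proof (H (1 - s) ltac:(lra)).
  pose proof (bernoulli_ineq (- s) k ltac:(lra)).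
  replace (1 + - s) with (1 - s) in * by ring.
  assert (X * (1 + INR k * - s) <= X * (1 - s) ^ k) by (apply Rmult_le_compat_l; assumption).
  nra.
Qed.

(** * Convergent power series *)

Section Series.
Local Open Scope C_scope.

Definition ctends (u : nat -> C) (l : C) : Prop :=
  forall eps, (0 < eps)%R -> exists N0, forall N, (N0 <= N)%nat -> (Cmod (u N - l) < eps)%R.

Definition is_cpseries (c : nat -> C) (z l : C) : Prop :=
  ctends (fun N => csum (fun m => c m * z ^ m) N) l.

Lemma Cseries_is_cpseries c z l : Cseries c z l -> is_cpseries c z l.
Proof.
  assert (Hpow : forall n, Defs.Cpow z n = z ^ n).
  { induction n; simpl; [reflexivity|]. rewrite IHn. reflexivity. }
  assert (Hsum : forall N, Cpsum c z N = csum (fun m => c m * z ^ m) N).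
  { induction N; simpl; [reflexivity|]. rewrite IHN, Hpow. reflexivity. }
  intros H eps Heps. destruct (H eps Heps) as [N0 HN]. exists N0. intros N HN0.
  specialize (HN N HN0). rewrite Cmod_Cnorm, Hsum in HN. exact HN.
Qed.

Lemma ctends_plus u v l1 l2 :
  ctends u l1 -> ctends v l2 -> ctends (fun N => u N + v N) (l1 + l2).
Proof.
  intros Hu Hv eps Heps.
  destruct (Hu (eps / 2)%R ltac:(lra)) as [N1 HN1].
  destruct (Hv (eps / 2)%R ltac:(lra)) as [N2 HN2].
  exists (Nat.max N1 N2). intros N HN.
  specialize (HN1 N ltac:(lia)). specialize (HN2 N ltac:(lia)).
  replace (u N + v N - (l1 + l2)) with ((u N - l1) + (v N - l2)) by ring.
  eapply Rle_lt_trans; [apply Cmod_triangle | lra].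
Qed.

Lemma ctends_scal a u l : ctends u l -> ctends (fun N => a * u N) (a * l).
Proof.
  intros Hu eps Heps. pose proof (Cmod_ge_0 a).
  destruct (Hu (eps / (Cmod a + 1))%R) as [N0 HN]; [apply Rdiv_lt_0_compat; lra|].
  exists N0. intros N HN0. specialize (HN N HN0).
  replace (a * u N - a * l) with (a * (u N - l)) by ring. rewrite Cmod_mult.
  apply (Rmult_lt_compat_l (Cmod a + 1)) in HN; [|lra].
  replace ((Cmod a + 1) * (eps / (Cmod a + 1)))%R with eps in HN by (field; lra).
  pose proof (Cmod_ge_0 (u N - l)). nra.
Qed.

Lemma ctends_ext u v l : (forall N, u N = v N) -> ctends u l -> ctends v l.
Proof.
  intros E Hu eps Heps. destruct (Hu eps Heps) as [N0 HN].
  exists N0. intros N HN0. rewrite <- E. auto.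
Qed.

Lemma ctends_succ u l : ctends (fun N => u (S N)) l -> ctends u l.
Proof.
  intros Hu eps Heps. destruct (Hu eps Heps) as [N0 HN].
  exists (S N0). intros [|N] HN0; [lia|]. apply HN. lia.
Qed.

Lemma ctends_bounded u l : ctends u l -> exists K, forall n, (Cmod (u n) <= K)%R.
Proof.
  intros Hu. destruct (Hu 1%R ltac:(lra)) as [N0 HN].
  destruct (bounded_initial_segment (fun n => Cmod (u n)) N0) as [B HB].
  exists (Rmax B (Cmod l + 1)). intros n.
  destruct (Nat.lt_ge_cases n N0) as [Hn|Hn].
  - eapply Rle_trans; [apply HB, Hn | apply Rmax_l].
  - eapply Rle_trans; [|apply Rmax_r].
    replace (u n) with ((u n - l) + l) by ring.
    eapply Rle_trans; [apply Cmod_triangle|]. specialize (HN n Hn). lra.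
Qed.

Lemma ctends_uniform_finite (u : nat -> nat -> C) (l : nat -> C) M :
  (forall j, (j < M)%nat -> ctends (u j) (l j)) ->
  forall eps, 0 < eps -> exists N0, forall j N, (j < M)%nat -> (N0 <= N)%nat ->
    Cmod (u j N - l j)%C < eps.
Proof.
  intros Hu eps Heps. induction M as [|M IH]; [exists O; intros; lia|].
  destruct IH as [N1 H1]; [intros; apply Hu; lia|].
  destruct (Hu M ltac:(lia) eps Heps) as [N2 H2].
  exists (Nat.max N1 N2). intros j N Hj HN.
  destruct (Nat.eq_dec j M) as [->|]; [apply H2 | apply H1]; lia.
Qed.

Lemma is_cpseries_ext c d z l :
  (forall m, c m = d m) -> is_cpseries c z l -> is_cpseries d z l.
Proof.
  intros E. apply ctends_ext. intros N. apply csum_ext. intros m _. rewrite E. reflexivity.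
Qed.

Lemma is_cpseries_plus c d z l1 l2 :
  is_cpseries c z l1 -> is_cpseries d z l2 -> is_cpseries (fun m => c m + d m) z (l1 + l2).
Proof.
  intros Hc Hd. unfold is_cpseries. eapply ctends_ext; [|apply (ctends_plus _ _ _ _ Hc Hd)].
  intros N. cbv beta. rewrite <- csum_plus. apply csum_ext. intros m _. ring.
Qed.

Lemma is_cpseries_scal a c z l :
  is_cpseries c z l -> is_cpseries (fun m => a * c m) z (a * l).
Proof.
  intros Hc. unfold is_cpseries. eapply ctends_ext; [|apply (ctends_scal a _ _ Hc)].
  intros N. cbv beta. rewrite <- csum_scal. apply csum_ext. intros m _. ring.
Qed.

Lemma is_cpseries_shift c z l :
  is_cpseries c z l -> is_cpseries (fun m => match m with O => 0 | S k => c k end) z (z * l).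
Proof.
  intros Hc. apply ctends_succ. eapply ctends_ext; [|apply (ctends_scal z _ _ Hc)].
  intros N. cbv beta. rewrite csum_shift, <- csum_scal. simpl.
  rewrite (csum_ext (fun i => c i * (z * z ^ i)) (fun i => z * (c i * z ^ i))); [ring|].
  intros i _. ring.
Qed.

Lemma is_cpseries_const b z :
  is_cpseries (fun m => match m with O => b | S _ => 0 end) z b.
Proof.
  intros eps Heps. exists 1%nat. intros [|N] HN; [lia|].
  rewrite csum_shift, (csum_ext _ (fun _ => 0 * 0)) by (intros; simpl; ring).
  rewrite csum_scal. replace (b * z ^ 0 + 0 * csum (fun _ => 0) N - b) with (RtoC 0) by (simpl; ring).
  rewrite Cmod_0. exact Heps.
Qed.

Lemma is_cpseries_terms_bounded c z l :
  is_cpseries c z l -> exists K, forall n, (Cmod (c n * z ^ n) <= K)%R.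
Proof.
  intros Hc. destruct (ctends_bounded _ _ Hc) as [K HK]. exists (2 * K)%R. intros n.
  replace (c n * z ^ n) with (csum (fun m => c m * z ^ m) (S n) - csum (fun m => c m * z ^ m) n)
    by (simpl; ring).
  eapply Rle_trans; [apply Cmod_triangle|]. rewrite Cmod_opp.
  pose proof (HK (S n)). pose proof (HK n). lra.
Qed.

End Series.

(** * Term-by-term differentiation *)

Section TermwiseDerivative.
Local Open Scope C_scope.

Definition pow_remainder (w z : C) (n : nat) : C :=
  w ^ S n - z ^ S n - RtoC (INR (S n)) * z ^ n * (w - z).

Lemma pow_remainder_S w z n : pow_remainder w z (S n) =
  w * pow_remainder w z n + RtoC (INR (S n)) * z ^ n * ((w - z) * (w - z)).
Proof. unfold pow_remainder. rewrite (S_INR (S n)), RtoC_plus. simpl. ring. Qed.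

Lemma pow_remainder_bound w z rho n : (Cmod w <= rho)%R -> (Cmod z <= rho)%R ->
  (rho * Cmod (pow_remainder w z n) <= INR n ^ 2 * rho ^ n * Cmod (w - z) ^ 2)%R.
Proof.
  intros Hw Hz. pose proof (Cmod_ge_0 w) as Hw0.
  set (d := Cmod (w - z)). assert (Hd : (0 <= d)%R) by apply Cmod_ge_0.
  induction n as [|n IH].
  - replace (pow_remainder w z 0) with (RtoC 0) by (unfold pow_remainder; simpl; ring).
    rewrite Cmod_0. simpl. lra.
  - pose proof (Cmod_ge_0 (pow_remainder w z n)). set (R0 := Cmod (pow_remainder w z n)) in *.
    assert (Hzn : (Cmod (z ^ n) <= rho ^ n)%R).
    { rewrite Cmod_pow. apply pow_incr. split; [apply Cmod_ge_0 | exact Hz]. }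
    assert (Hstep : (Cmod (pow_remainder w z (S n)) <= Cmod w * R0 + INR (S n) * rho ^ n * d ^ 2)%R).
    { rewrite pow_remainder_S. eapply Rle_trans; [apply Cmod_triangle|].
      rewrite !Cmod_mult, Cmod_R, Rabs_pos_eq by apply pos_INR.
      replace (Cmod (w - z) * Cmod (w - z))%R with (d ^ 2)%R by (unfold d; ring).
      apply Rplus_le_compat_l. pose proof (pos_INR (S n)). rewrite !Rmult_assoc.
      apply Rmult_le_compat_l; [lra|]. apply Rmult_le_compat_r; [apply pow2_ge_0 | exact Hzn]. }
    set (P := (rho ^ n * d ^ 2)%R).
    assert (HP : (0 <= P)%R) by (apply Rmult_le_pos; [apply pow_le | apply pow2_ge_0]; lra).
    assert (Hwr : (Cmod w * (rho * R0) <= rho * (INR n ^ 2 * P))%R).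
    { apply Rmult_le_compat; try lra. apply Rmult_le_pos; lra.
      unfold P. rewrite <- Rmult_assoc. exact IH. }
    replace (INR (S n) ^ 2 * rho ^ S n * d ^ 2)%R
      with (rho * ((INR n + 1) * (INR n + 1) * P))%R by (unfold P; rewrite S_INR; simpl; ring).
    rewrite S_INR in Hstep. pose proof (pos_INR n).
    assert (0 <= rho * INR n * P)%R by (apply Rmult_le_pos; [apply Rmult_le_pos|]; lra).
    apply Rle_trans with (rho * (Cmod w * R0 + (INR n + 1) * P))%R; [|lra].
    apply Rmult_le_compat_l; [lra|]. unfold P. rewrite <- Rmult_assoc. exact Hstep.
Qed.

Lemma csum_pow_remainder c w z N :
  csum (fun m => c (S m) * pow_remainder w z m) N =
  csum (fun m => c m * w ^ m) (S N) - csum (fun m => c m * z ^ m) (S N)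
  - (w - z) * csum (fun m => RtoC (INR (S m)) * c (S m) * z ^ m) N.
Proof.
  rewrite !csum_shift, <- csum_scal.
  transitivity (csum (fun m => c (S m) * w ^ S m) N - csum (fun m => c (S m) * z ^ S m) N
    - csum (fun m => (w - z) * (RtoC (INR (S m)) * c (S m) * z ^ m)) N).
  - rewrite <- !csum_minus. apply csum_ext. intros m _. unfold pow_remainder. ring.
  - simpl. ring.
Qed.

Lemma coef_pow_remainder_bound c K rho rho' w z m : (0 < rho < rho')%R ->
  (Cmod (c (S m)) * rho' ^ S m <= K)%R -> (Cmod w <= rho)%R -> (Cmod z <= rho)%R ->
  (rho * rho' * Cmod (c (S m) * pow_remainder w z m)
   <= K * (INR m ^ 2 * (rho / rho') ^ m) * Cmod (w - z) ^ 2)%R.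
Proof.
  intros Hrho Hc Hw Hz. rewrite Cmod_mult.
  pose proof (Cmod_ge_0 (c (S m))). pose proof (pow_remainder_bound w z rho m Hw Hz) as HR.
  assert (Erho : (rho ^ m = (rho / rho') ^ m * rho' ^ m)%R).
  { rewrite <- Rpow_mult_distr. f_equal. field. lra. }
  assert (0 <= INR m ^ 2 * (rho / rho') ^ m)%R.
  { apply Rmult_le_pos; [apply pow2_ge_0 | apply pow_le, Rdiv_unit_interval; lra]. }
  apply Rle_trans with (rho' * Cmod (c (S m)) * (INR m ^ 2 * rho ^ m * Cmod (w - z) ^ 2))%R.
  - replace (rho * rho' * (Cmod (c (S m)) * Cmod (pow_remainder w z m)))%R
      with (rho' * Cmod (c (S m)) * (rho * Cmod (pow_remainder w z m)))%R by ring.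
    apply Rmult_le_compat_l; [nra | exact HR].
  - rewrite Erho. simpl in Hc.
    replace (rho' * Cmod (c (S m)) * (INR m ^ 2 * ((rho / rho') ^ m * rho' ^ m) * Cmod (w - z) ^ 2))%R
      with (Cmod (c (S m)) * (rho' * rho' ^ m) * (INR m ^ 2 * (rho / rho') ^ m) * Cmod (w - z) ^ 2)%R
      by ring.
    apply Rmult_le_compat_r; [apply pow2_ge_0|].
    apply Rmult_le_compat_r; assumption.
Qed.

Lemma pow_remainder_sum_bound c K rho rho' : (0 < rho < rho')%R ->
  (forall n, Cmod (c n) * rho' ^ n <= K)%R ->
  exists K2, (0 <= K2)%R /\ forall w z N, (Cmod w <= rho)%R -> (Cmod z <= rho)%R ->
    (Cmod (csum (fun m => c (S m) * pow_remainder w z m)%C N) <= K2 * Cmod (w - z)%C ^ 2)%R.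
Proof.
  intros Hrho HK.
  assert (HK0 : (0 <= K)%R).
  { specialize (HK O). pose proof (Cmod_ge_0 (c O)). simpl in HK. lra. }
  destruct (nat_sq_mul_pow_geometric (rho / rho')) as [B [s [Hs HB]]];
    [apply Rdiv_unit_interval; lra|].
  assert (HB0 : (0 <= B)%R) by (specialize (HB O); simpl in HB; lra).
  set (A := (K * B / (rho * rho'))%R).
  assert (HA : (0 <= A)%R).
  { unfold A, Rdiv. apply Rmult_le_pos; [apply Rmult_le_pos; lra|].
    apply Rlt_le, Rinv_0_lt_compat, Rmult_lt_0_compat; lra. }
  exists (A / (1 - s))%R. split.
  { unfold Rdiv. apply Rmult_le_pos; [lra | apply Rlt_le, Rinv_0_lt_compat; lra]. }
  intros w z N Hw Hz. set (d := Cmod (w - z)). pose proof (Cmod_ge_0 (w - z)).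
  assert (Hterm : forall m, (Cmod (c (S m) * pow_remainder w z m) <= A * d ^ 2 * s ^ m)%R).
  { intros m. pose proof (coef_pow_remainder_bound c K rho rho' w z m Hrho (HK (S m)) Hw Hz).
    pose proof (HB m). assert (0 <= d ^ 2)%R by apply pow2_ge_0.
    apply (Rmult_le_reg_l (rho * rho')); [nra|].
    replace (rho * rho' * (A * d ^ 2 * s ^ m))%R with (K * (B * s ^ m) * d ^ 2)%R
      by (unfold A; field; lra).
    eapply Rle_trans; [eassumption|].
    apply Rmult_le_compat_r; [assumption|]. apply Rmult_le_compat_l; assumption. }
  eapply Rle_trans; [apply Cmod_csum|].
  eapply Rle_trans; [apply rsum_le; intros m _; apply Hterm|].
  rewrite rsum_scal. pose proof (rsum_geom s N Hs).
  assert (0 <= A * d ^ 2)%R by (apply Rmult_le_pos; [lra | apply pow2_ge_0]).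
  unfold Rdiv. replace (A * / (1 - s) * d ^ 2)%R with (A * d ^ 2 * / (1 - s))%R by ring.
  apply Rmult_le_compat_l; assumption.
Qed.

Lemma partial_sum_deriv_estimate c f l w z N K2 :
  Cmod (csum (fun m => c (S m) * pow_remainder w z m) N) <= K2 * Cmod (w - z) ^ 2 ->
  Cmod ((w - z) * (csum (fun m => RtoC (INR (S m)) * c (S m) * z ^ m) N - l))
  <= Cmod (f w - f z - l * (w - z)) + K2 * Cmod (w - z) ^ 2
     + Cmod (csum (fun m => c m * w ^ m) (S N) - f w)
     + Cmod (csum (fun m => c m * z ^ m) (S N) - f z).
Proof.
  rewrite csum_pow_remainder. intros HP.
  set (D := csum (fun m => RtoC (INR (S m)) * c (S m) * z ^ m) N) in *.
  set (Sw := csum (fun m => c m * w ^ m) (S N)) in *.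
  set (Sz := csum (fun m => c m * z ^ m) (S N)) in *.
  replace ((w - z) * (D - l))
    with ((f w - f z - l * (w - z)) - (Sw - Sz - (w - z) * D) + (Sw - f w) - (Sz - f z)) by ring.
  eapply Rle_trans; [apply Cmod_sub_le|].
  eapply Rle_trans; [apply Rplus_le_compat_r, Cmod_triangle|].
  eapply Rle_trans; [apply Rplus_le_compat_r, Rplus_le_compat_r, Cmod_sub_le|].
  lra.
Qed.

Lemma cderiv_Cmod f z l : cderiv f z l -> forall eps, (0 < eps)%R -> exists del, (0 < del)%R /\
  forall w, (0 < Cmod (w - z) < del)%R -> (Cmod (f w - f z - l * (w - z)) <= eps * Cmod (w - z))%R.
Proof.
  intros H eps Heps. destruct (H eps Heps) as [del [Hdel Hw]]. exists del. split; [exact Hdel|].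
  intros w Hwz. specialize (Hw w). rewrite !Cmod_Cnorm in Hw. exact (Hw Hwz).
Qed.

Lemma is_cpseries_deriv c f z l :
  (forall w, (Cmod w < 1)%R -> is_cpseries c w (f w)) -> (Cmod z < 1)%R -> cderiv f z l ->
  is_cpseries (fun m => RtoC (INR (S m)) * c (S m)) z l.
Proof.
  intros Hser Hz Hder. pose proof (Cmod_ge_0 z) as Hz0.
  set (rho := ((1 + Cmod z) / 2)%R). set (rho' := ((3 + Cmod z) / 4)%R).
  assert (Hrho' : Cmod (RtoC rho') = rho') by (rewrite Cmod_R, Rabs_pos_eq; unfold rho'; lra).
  destruct (is_cpseries_terms_bounded c rho' (f rho')) as [K HK].
  { apply Hser. rewrite Hrho'. unfold rho'. lra. }
  destruct (pow_remainder_sum_bound c K rho rho') as [K2 [HK2 HP]].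
  { unfold rho, rho'. lra. }
  { intros n. specialize (HK n). rewrite Cmod_mult, Cmod_pow, Hrho' in HK. exact HK. }
  intros eps Heps. set (eta := (eps / 4)%R).
  destruct (cderiv_Cmod _ _ _ Hder eta ltac:(unfold eta; lra)) as [del [Hdel Hf']].
  (* increment along the real axis, small enough for the derivative, the disc and the remainder *)
  set (delta := Rmin (del / 2) (Rmin (rho - Cmod z) (eta / (K2 + 1)))).
  assert (Hdelta : (0 < delta)%R).
  { unfold delta, rho, eta. repeat apply Rmin_pos; try lra. apply Rdiv_lt_0_compat; lra. }
  assert (Hd1 : (delta <= del / 2)%R) by apply Rmin_l.
  assert (Hd2 : (delta <= rho - Cmod z)%R) by (eapply Rle_trans; [apply Rmin_r | apply Rmin_l]).
  assert (Hd3 : (K2 * delta <= eta)%R).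
  { assert (H : (delta <= eta / (K2 + 1))%R) by (eapply Rle_trans; [apply Rmin_r | apply Rmin_r]).
    apply (Rmult_le_compat_l (K2 + 1)) in H; [|lra].
    replace ((K2 + 1) * (eta / (K2 + 1)))%R with eta in H by (field; lra). nra. }
  set (w := z + RtoC delta).
  assert (Hwz : Cmod (w - z) = delta).
  { replace (w - z) with (RtoC delta) by (unfold w; ring). rewrite Cmod_R, Rabs_pos_eq; lra. }
  assert (Hw : (Cmod w <= rho)%R).
  { unfold w. eapply Rle_trans; [apply Cmod_triangle|]. rewrite Cmod_R, Rabs_pos_eq; lra. }
  assert (Hed : (0 < eta * delta)%R) by (unfold eta; nra).
  destruct (Hser w ltac:(unfold rho in Hw; lra) _ Hed) as [N1 HN1].
  destruct (Hser z Hz _ Hed) as [N2 HN2].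
  exists (Nat.max N1 N2). intros N HN.
  specialize (HN1 (S N) ltac:(lia)). specialize (HN2 (S N) ltac:(lia)).
  specialize (Hf' w ltac:(rewrite Hwz; lra)).
  pose proof (partial_sum_deriv_estimate c f l w z N K2 (HP w z N Hw ltac:(unfold rho; lra)))
    as Hest.
  rewrite Cmod_mult, Hwz in Hest. rewrite Hwz in Hf'. simpl pow in Hest.
  apply (Rmult_lt_reg_l delta); [lra|]. unfold eta in *. nra.
Qed.

End TermwiseDerivative.

(** * Sampling on circles at roots of unity *)

Section RootsOfUnity.
Local Open Scope C_scope.

Definition zeta (M : nat) : C := (cos (2 * PI / INR M), sin (2 * PI / INR M)).

Lemma zeta_pow M n :
  zeta M ^ n = (cos (INR n * (2 * PI / INR M)), sin (INR n * (2 * PI / INR M))).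
Proof.
  induction n.
  - simpl. rewrite Rmult_0_l, cos_0, sin_0. reflexivity.
  - rewrite Cpow_S, IHn, S_INR, Rmult_plus_distr_r, Rmult_1_l, Rplus_comm, cos_plus, sin_plus.
    unfold zeta, Cmult. apply injective_projections; simpl; [reflexivity | apply Rplus_comm].
Qed.

Lemma Cmod_zeta_pow M n : Cmod (zeta M ^ n) = 1%R.
Proof.
  rewrite zeta_pow. unfold Cmod. simpl fst; simpl snd. rewrite <- sqrt_1. f_equal.
  rewrite <- (sin2_cos2 (INR n * (2 * PI / INR M))). unfold Rsqr. ring.
Qed.

Lemma zeta_pow_order M : (0 < M)%nat -> zeta M ^ M = 1.
Proof.
  intros HM. rewrite zeta_pow.
  replace (INR M * (2 * PI / INR M))%R with (2 * PI)%R by (field; apply not_0_INR; lia).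
  rewrite cos_2PI, sin_2PI. reflexivity.
Qed.

Lemma zeta_pow_neq1 M p : (0 < M)%nat -> (p mod M <> 0)%nat -> zeta M ^ p <> 1.
Proof.
  intros HM Hp E. rewrite zeta_pow in E. injection E as Hc Hs.
  pose proof (Nat.div_mod p M ltac:(lia)) as Hd.
  set (s := (p mod M)%nat) in *.
  assert (Hsl : (s < M)%nat) by (apply Nat.mod_upper_bound; lia).
  assert (HMr : (0 < INR M)%R) by (apply lt_0_INR; lia).
  assert (Ex : (INR p * (2 * PI / INR M) = INR s * (2 * PI / INR M) + 2 * INR (p / M) * PI)%R).
  { rewrite Hd at 1. rewrite plus_INR, mult_INR. field. lra. }
  rewrite Ex, cos_period in Hc. rewrite Ex, sin_period in Hs.
  set (y := (INR s * (2 * PI / INR M))%R) in *.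
  assert (Hy : (0 < y < 2 * PI)%R).
  { pose proof PI_RGT_0. assert (0 < INR s < INR M)%R by (split; [apply lt_0_INR | apply lt_INR]; lia).
    unfold y. split.
    - apply Rmult_lt_0_compat; [lra | apply Rdiv_lt_0_compat; lra].
    - apply (Rmult_lt_reg_r (INR M)); [lra|].
      replace (INR s * (2 * PI / INR M) * INR M)%R with (INR s * (2 * PI))%R by (field; lra). nra. }
  destruct (sin_eq_O_2PI_0 y ltac:(lra) ltac:(lra) Hs) as [H|[H|H]]; try lra.
  rewrite H, cos_PI in Hc. lra.
Qed.

Lemma zeta_pow_conj M m : (0 < M)%nat -> Cconj (zeta M ^ m) = zeta M ^ (m * (M - 1)).
Proof.
  intros HM. rewrite !zeta_pow. unfold Cconj. simpl.
  assert (HMr : (0 < INR M)%R) by (apply lt_0_INR; lia).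
  replace (INR (m * (M - 1)) * (2 * PI / INR M))%R
    with (- (INR m * (2 * PI / INR M)) + 2 * INR m * PI)%R
    by (rewrite mult_INR, minus_INR by lia; simpl; field; lra).
  rewrite cos_period, sin_period, cos_neg, sin_neg. reflexivity.
Qed.

Definition dvd_ind (M p : nat) : R := if Nat.eqb (p mod M) 0 then 1 else 0.

Lemma dvd_ind_range M p : (0 <= dvd_ind M p <= 1)%R.
Proof. unfold dvd_ind. destruct (Nat.eqb _ _); lra. Qed.

Lemma dvd_ind_0 M p : (p mod M <> 0)%nat -> dvd_ind M p = 0%R.
Proof. intros H. unfold dvd_ind. destruct (Nat.eqb_spec (p mod M) 0); [contradiction | reflexivity]. Qed.

Lemma dvd_ind_1 M p : (p mod M = 0)%nat -> dvd_ind M p = 1%R.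
Proof. intros H. unfold dvd_ind. rewrite H. reflexivity. Qed.

Lemma csum_zeta_pow M p : (0 < M)%nat ->
  csum (fun j => (zeta M ^ p) ^ j) M = RtoC (INR M * dvd_ind M p).
Proof.
  intros HM. unfold dvd_ind. destruct (Nat.eqb_spec (p mod M) 0) as [H|H].
  - rewrite (Nat.div_mod_eq p M), H, Nat.add_0_r, Cpow_mult_r, zeta_pow_order, Cpow_1_l by lia.
    rewrite Rmult_1_r. clear. induction M; [reflexivity|].
    rewrite S_INR, RtoC_plus. simpl. rewrite IHM, Cpow_1_l. reflexivity.
  - (* geometric sum of a ratio that is an M-th root of unity but not 1 *)
    assert (G : (zeta M ^ p - 1) * csum (fun j => (zeta M ^ p) ^ j) M = 0).
    { rewrite csum_geometric, <- Cpow_mult_r, Nat.mul_comm, Cpow_mult_r, zeta_pow_order,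
        Cpow_1_l by lia. ring. }
    assert (Hne : zeta M ^ p - 1 <> 0) by (apply Cminus_eq_contra, zeta_pow_neq1; assumption).
    rewrite Rmult_0_r.
    replace (csum (fun j => (zeta M ^ p) ^ j) M)
      with (/ (zeta M ^ p - 1) * ((zeta M ^ p - 1) * csum (fun j => (zeta M ^ p) ^ j) M))
      by (field; exact Hne).
    rewrite G. ring.
Qed.

End RootsOfUnity.

Lemma Cmod_csum_Re_twist_le (s w : nat -> C) M eps : 0 <= eps ->
  (forall j, Cmod (w j) = 1) -> (forall j, (j < M)%nat -> - eps <= Re (s j)) ->
  Cmod (csum (fun j => RtoC (2 * Re (s j)) * w j)%C M) <= 2 * Re (csum s M) + 4 * INR M * eps.
Proof.
  intros Heps Hw HS. eapply Rle_trans; [apply Cmod_csum|].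
  replace (2 * Re (csum s M) + 4 * INR M * eps)
    with (rsum (fun j => 2 * Re (s j) + 4 * eps) M)
    by (rewrite rsum_plus, rsum_scal, rsum_const, Re_csum; ring).
  apply rsum_le. intros j Hj. specialize (HS j Hj).
  rewrite Cmod_mult, Hw, Cmod_R, Rmult_1_r.
  unfold Rabs. destruct Rcase_abs; lra.
Qed.

Section CircleSums.
Local Open Scope C_scope.

Definition circle_sum (e : nat -> C) (r : R) (M N j : nat) : C :=
  csum (fun m => e m * (RtoC r * zeta M ^ j) ^ m) N.

Lemma csum_csum_zeta_pow M N (d : nat -> C) (p : nat -> nat) : (0 < M)%nat ->
  csum (fun j => csum (fun m => d m * (zeta M ^ p m) ^ j) N) M =
  csum (fun m => d m * RtoC (INR M * dvd_ind M (p m))) N.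
Proof.
  intros HM. rewrite csum_swap. apply csum_ext. intros m _.
  rewrite csum_scal, csum_zeta_pow by exact HM. reflexivity.
Qed.

Lemma circle_sum_twisted e r M N l : (0 < M)%nat ->
  csum (fun j => circle_sum e r M N j * (zeta M ^ l) ^ j) M =
  csum (fun m => e m * RtoC (r ^ m) * RtoC (INR M * dvd_ind M (m + l))) N.
Proof.
  intros HM. rewrite <- (csum_csum_zeta_pow M N _ (fun m => m + l)%nat HM).
  apply csum_ext. intros j _. unfold circle_sum. rewrite Cmult_comm, <- csum_scal.
  apply csum_ext. intros m _.
  rewrite Cpow_mult_l, <- RtoC_pow, <- !Cpow_mult_r, Nat.mul_add_distr_r, Cpow_add_r,
    (Nat.mul_comm j m).
  ring.
Qed.

Lemma circle_sum_average e r M N : (0 < M)%nat ->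
  csum (circle_sum e r M N) M =
  csum (fun m => e m * RtoC (r ^ m) * RtoC (INR M * dvd_ind M m)) N.
Proof.
  intros HM. transitivity (csum (fun j => circle_sum e r M N j * (zeta M ^ 0) ^ j) M).
  - apply csum_ext. intros j _. simpl. rewrite Cpow_1_l. ring.
  - rewrite circle_sum_twisted by exact HM. apply csum_ext. intros m _.
    rewrite Nat.add_0_r. reflexivity.
Qed.

Lemma circle_sum_conj_twisted e r M N l : (0 < M)%nat ->
  csum (fun j => Cconj (circle_sum e r M N j) * (zeta M ^ l) ^ j) M =
  csum (fun m => Cconj (e m) * RtoC (r ^ m) * RtoC (INR M * dvd_ind M (m * (M - 1) + l))) N.
Proof.
  intros HM. rewrite <- (csum_csum_zeta_pow M N _ (fun m => m * (M - 1) + l)%nat HM).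
  apply csum_ext. intros j _. unfold circle_sum. rewrite csum_conj, Cmult_comm, <- csum_scal.
  apply csum_ext. intros m _.
  rewrite Cmult_conj, Cpow_conj, Cmult_conj, Cconj_RtoC, zeta_pow_conj by exact HM.
  rewrite Cpow_mult_l, <- RtoC_pow, <- !Cpow_mult_r, Nat.mul_add_distr_r, Cpow_add_r.
  replace (j * (M - 1) * m)%nat with (m * (M - 1) * j)%nat by ring.
  ring.
Qed.

End CircleSums.

Lemma mod_alias_ne0 M k m :
  (2 * k < M)%nat -> (m < M - k)%nat -> m <> k -> ((m + (M - k)) mod M <> 0)%nat.
Proof.
  intros. destruct (Nat.lt_ge_cases (m + (M - k)) M).
  - rewrite Nat.mod_small; lia.
  - rewrite <- (Nat.mod_unique (m + (M - k)) M 1 (m + (M - k) - M)); lia.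
Qed.

Lemma mod_alias_conj_ne0 M k m : (1 <= k)%nat -> (2 * k < M)%nat -> (m < M - k)%nat ->
  ((m * (M - 1) + (M - k)) mod M <> 0)%nat.
Proof. intros. rewrite <- (Nat.mod_unique _ M m (M - m - k)); nia. Qed.

Lemma aliasing_bound e r K t k M N : (1 <= k)%nat -> (2 * k < M)%nat -> (k < N)%nat ->
  0 <= r -> 0 <= t < 1 -> (forall m, Cmod (e m) * r ^ m <= K * t ^ m) ->
  Cmod (csum (fun m => e m * RtoC (r ^ m) * RtoC (INR M * dvd_ind M (m + (M - k)))
          + Cconj (e m) * RtoC (r ^ m) * RtoC (INR M * dvd_ind M (m * (M - 1) + (M - k))))%C N
        - RtoC (INR M) * (e k * RtoC (r ^ k)))%C
  <= 2 * INR M * (K * (t ^ (M - k) / (1 - t))).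
Proof.
  intros Hk HM HN Hr Ht Hterm.
  assert (HK : 0 <= K) by (specialize (Hterm O); pose proof (Cmod_ge_0 (e O)); simpl in Hterm; lra).
  pose proof (pos_INR M).
  rewrite <- (csum_delta (RtoC (INR M) * (e k * RtoC (r ^ k))) k N HN), <- csum_minus.
  eapply Rle_trans; [apply Cmod_csum|].
  apply Rle_trans with (rsum (fun m => 2 * INR M * (if Nat.leb (M - k) m then K * t ^ m else 0)) N).
  2: { rewrite rsum_scal. apply Rmult_le_compat_l; [lra | apply rsum_geom_tail; assumption]. }
  apply rsum_le. intros m _.
  destruct (Nat.leb_spec (M - k) m).
  - destruct (Nat.eqb_spec m k); [lia|].
    pose proof (dvd_ind_range M (m + (M - k))). pose proof (dvd_ind_range M (m * (M - 1) + (M - k))).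
    pose proof (Hterm m). pose proof (Cmod_ge_0 (e m)). assert (0 <= r ^ m) by (apply pow_le; lra).
    replace (_ - 0)%C with (e m * RtoC (r ^ m) * RtoC (INR M * dvd_ind M (m + (M - k)))
      + Cconj (e m) * RtoC (r ^ m) * RtoC (INR M * dvd_ind M (m * (M - 1) + (M - k))))%C by ring.
    eapply Rle_trans; [apply Cmod_triangle|].
    rewrite !Cmod_mult, Cmod_conj, !Cmod_R, !Rabs_pos_eq by nra.
    assert (0 <= Cmod (e m) * r ^ m) by (apply Rmult_le_pos; assumption).
    set (X := Cmod (e m) * r ^ m) in *.
    assert (0 <= X * INR M) by (apply Rmult_le_pos; assumption). assert (X * INR M <= K * t ^ m * INR M) by nra.
    replace (X * (INR M * dvd_ind M (m + (M - k))) + X * (INR M * dvd_ind M (m * (M - 1) + (M - k))))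
      with (X * INR M * (dvd_ind M (m + (M - k)) + dvd_ind M (m * (M - 1) + (M - k)))) by ring.
    nra.
  - (* below the threshold only m = k survives, and it cancels *)
    rewrite (dvd_ind_0 M (m * (M - 1) + (M - k))) by (apply mod_alias_conj_ne0; lia).
    destruct (Nat.eqb_spec m k) as [->|Hmk].
    + rewrite dvd_ind_1 by (replace (k + (M - k))%nat with M by lia; apply Nat.Div0.mod_same).
      match goal with |- Cmod ?x <= _ => replace x with (RtoC 0) by (rewrite !RtoC_mult; ring) end.
      rewrite Cmod_0. lra.
    + rewrite dvd_ind_0 by (apply mod_alias_ne0; lia).
      match goal with |- Cmod ?x <= _ => replace x with (RtoC 0) by (rewrite !RtoC_mult; ring) end.
      rewrite Cmod_0. lra.
Qed.

Lemma Re_average_bound e r K t L M N : (L <= M)%nat -> (0 < N)%nat ->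
  0 <= r -> 0 <= t < 1 -> (forall m, Cmod (e m) * r ^ m <= K * t ^ m) ->
  Re (csum (fun m => e m * RtoC (r ^ m) * RtoC (INR M * dvd_ind M m))%C N)
  <= INR M * Re (e 0%nat) + INR M * (K * (t ^ L / (1 - t))).
Proof.
  intros HLM HN Hr Ht Hterm.
  assert (HK : 0 <= K) by (specialize (Hterm O); pose proof (Cmod_ge_0 (e O)); simpl in Hterm; lra).
  pose proof (pos_INR M).
  assert (Htail : forall m, 0 <= (if Nat.leb L m then K * t ^ m else 0)).
  { intros m. destruct (Nat.leb L m); [apply Rmult_le_pos; [lra | apply pow_le; lra] | lra]. }
  rewrite Re_csum.
  apply Rle_trans with (rsum (fun m => (if Nat.eqb m 0 then INR M * Re (e 0%nat) else 0)
                              + INR M * (if Nat.leb L m then K * t ^ m else 0)) N).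
  - apply rsum_le. intros m _. rewrite !re_scal_r.
    pose proof (Htail m). pose proof (dvd_ind_range M m).
    destruct (Nat.eqb_spec m 0) as [->|Hm0].
    + rewrite dvd_ind_1 by apply Nat.Div0.mod_0_l. simpl in *. nra.
    + destruct (Nat.lt_ge_cases m M).
      * rewrite dvd_ind_0 by (rewrite Nat.mod_small; lia). nra.
      * destruct (Nat.leb_spec L m); [|lia].
        pose proof (Hterm m). pose proof (Re_bounds (e m)). assert (0 <= r ^ m) by (apply pow_le; lra).
        assert (Re (e m) * r ^ m <= K * t ^ m) by nra.
        assert (Re (e m) * r ^ m * dvd_ind M m <= K * t ^ m).
        { destruct (Rle_lt_dec 0 (Re (e m) * r ^ m)); nra. }
        nra.
  - rewrite rsum_plus, rsum_delta0 by exact HN. rewrite rsum_scal.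
    pose proof (rsum_geom_tail K t L N HK Ht). nra.
Qed.

(** * Caratheodory's coefficient bound *)

Section Caratheodory.
Variables (e : nat -> C) (q : C -> C).
Hypothesis series_e : forall z, Cmod z < 1 -> is_cpseries e z (q z).
Hypothesis Re_q_pos : forall z, Cmod z < 1 -> 0 < Re (q z).

Lemma caratheodory_sampled k r K t M eps : (1 <= k)%nat -> 0 < r < 1 -> 0 <= t < 1 ->
  (forall m, Cmod (e m) * r ^ m <= K * t ^ m) -> (2 * k < M)%nat -> 0 < eps ->
  Cmod (e k) * r ^ k <= 2 * Re (e 0%nat) + 4 * eps + 4 * (K * (t ^ (M - k) / (1 - t))).
Proof.
  intros Hk Hr Ht Hterm HM Heps.
  assert (HM0 : (0 < M)%nat) by lia.
  assert (HMr : 0 < INR M) by (apply lt_0_INR; lia).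
  set (tail := K * (t ^ (M - k) / (1 - t))).
  assert (Hdisc : forall j, Cmod (RtoC r * zeta M ^ j) < 1).
  { intros j. rewrite Cmod_mult, Cmod_R, Cmod_zeta_pow, Rabs_pos_eq; lra. }
  destruct (ctends_uniform_finite (fun j N => circle_sum e r M N j) (fun j => q (RtoC r * zeta M ^ j)%C) M)
    with (eps := eps) as [N0 HN0]; [intros j _; apply series_e, Hdisc | exact Heps |].
  set (N := Nat.max N0 (S k)).
  set (samples := circle_sum e r M N).
  assert (HS : forall j, (j < M)%nat -> - eps <= Re (samples j)).
  { intros j Hj. apply (Re_ge_of_near _ (q (RtoC r * zeta M ^ j)%C)).
    - apply HN0; [exact Hj | unfold N; lia].
    - apply Re_q_pos, Hdisc. }
  set (w := fun j => ((zeta M ^ (M - k)) ^ j)%C).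
  assert (Hw : forall j, Cmod (w j) = 1).
  { intros j. unfold w. rewrite Cmod_pow, Cmod_zeta_pow. apply pow1. }
  (* w j = zeta^(-k j); the w-weighted average of 2 Re (samples j) is M e_k r^k up to aliasing *)
  pose proof (Cmod_csum_Re_twist_le samples w M eps ltac:(lra) Hw HS) as Htwist.
  rewrite (csum_ext _ (fun j => samples j * w j + Cconj (samples j) * w j)%C) in Htwist
    by (intros j _; rewrite <- Cplus_conj_Re; ring).
  rewrite csum_plus in Htwist. unfold samples, w in Htwist.
  rewrite circle_sum_twisted, circle_sum_conj_twisted, <- csum_plus in Htwist by exact HM0.
  pose proof (aliasing_bound e r K t k M N Hk HM ltac:(unfold N; lia) ltac:(lra) Ht Hterm) as Halias.
  pose proof (Re_average_bound e r K t (M - k) M N ltac:(lia) ltac:(unfold N; lia) ltac:(lra) Ht Hterm)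
    as Havg.
  rewrite <- circle_sum_average in Havg by exact HM0. fold samples tail in Havg, Halias.
  assert (HA : Cmod (RtoC (INR M) * (e k * RtoC (r ^ k)))%C = INR M * (Cmod (e k) * r ^ k)).
  { rewrite !Cmod_mult, !Cmod_R, !Rabs_pos_eq; [reflexivity | apply pow_le | ]; lra. }
  match type of Halias with Cmod (?T - ?A)%C <= _ => pose proof (Cmod_le_add_sub T A) as Htri end.
  rewrite HA in Htri.
  apply (Rmult_le_reg_l (INR M)); [exact HMr|]. unfold samples, tail in *. lra.
Qed.

Lemma caratheodory_radius k r : (1 <= k)%nat -> 0 < r < 1 -> Cmod (e k) * r ^ k <= 2 * Re (e 0%nat).
Proof.
  intros Hk Hr. set (rho := (1 + r) / 2).
  assert (Hrho : Cmod (RtoC rho) = rho) by (rewrite Cmod_R, Rabs_pos_eq; unfold rho; lra).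
  destruct (is_cpseries_terms_bounded e rho (q rho)) as [K HK].
  { apply series_e. rewrite Hrho. unfold rho. lra. }
  assert (HK0 : 0 <= K) by (specialize (HK O); pose proof (Cmod_ge_0 (e O * rho ^ 0)%C); lra).
  set (t := r / rho).
  assert (Ht : 0 <= t < 1) by (apply Rdiv_unit_interval; unfold rho; lra).
  assert (Hterm : forall m, Cmod (e m) * r ^ m <= K * t ^ m).
  { intros m. specialize (HK m). rewrite Cmod_mult, Cmod_pow, Hrho in HK.
    replace (r ^ m) with (rho ^ m * t ^ m)
      by (rewrite <- Rpow_mult_distr; f_equal; unfold t, rho; field; lra).
    assert (0 <= t ^ m) by (apply pow_le; lra). nra. }
  apply Rle_plus_epsilon. intros eps Heps.
  destruct (pow_lt_1_zero t ltac:(rewrite Rabs_pos_eq; lra) (eps * (1 - t) / (8 * (K + 1))))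
    as [N' HN']; [apply Rdiv_lt_0_compat; nra|].
  set (M := (2 * k + 1 + N')%nat).
  specialize (HN' (M - k)%nat ltac:(unfold M; lia)).
  rewrite Rabs_pos_eq in HN' by (apply pow_le; lra).
  pose proof (caratheodory_sampled k r K t M (eps / 8) Hk Hr Ht Hterm ltac:(unfold M; lia)
    ltac:(lra)) as Hc.
  assert (K * (t ^ (M - k) / (1 - t)) <= eps / 8).
  { apply Rle_trans with (K * (eps / (8 * (K + 1)))).
    - apply Rmult_le_compat_l; [exact HK0|].
      apply (Rmult_le_reg_r (1 - t)); [lra|].
      replace (t ^ (M - k) / (1 - t) * (1 - t)) with (t ^ (M - k)) by (field; lra).
      replace (eps / (8 * (K + 1)) * (1 - t)) with (eps * (1 - t) / (8 * (K + 1))) by (field; lra).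
      lra.
    - apply (Rmult_le_reg_r (8 * (K + 1))); [lra|].
      replace (K * (eps / (8 * (K + 1))) * (8 * (K + 1))) with (K * eps) by (field; lra).
      replace (eps / 8 * (8 * (K + 1))) with (eps * (K + 1)) by field. nra. }
  lra.
Qed.

Theorem caratheodory_coef_bound k : (1 <= k)%nat -> Cmod (e k) <= 2 * Re (e 0%nat).
Proof.
  intros Hk. apply (le_of_forall_pow_mul_le _ _ k (Cmod_ge_0 (e k))).
  intros r Hr. apply caratheodory_radius; assumption.
Qed.

End Caratheodory.

(** * Coefficients of the class W_H^0(alpha, beta) *)

Lemma Cmod_add_rotate (a b : C) : exists u, Cmod u = 1 /\ Cmod (a + u * b)%C = Cmod a + Cmod b.
Proof.
  pose proof (Cmod_ge_0 a). pose proof (Cmod_ge_0 b).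
  destruct (Req_dec (Cmod a) 0) as [Ha|Ha].
  { exists (RtoC 1). rewrite Cmod_1, (Cmod_eq_0 a Ha), Cmod_0.
    split; [reflexivity|]. replace (RtoC 0 + RtoC 1 * b)%C with b by ring. ring. }
  destruct (Req_dec (Cmod b) 0) as [Hb|Hb].
  { exists (RtoC 1). rewrite Cmod_1, Hb, (Cmod_eq_0 b Hb).
    split; [reflexivity|]. replace (a + RtoC 1 * RtoC 0)%C with a by ring. ring. }
  set (A := Cmod a) in *. set (B := Cmod b) in *.
  assert (HA : RtoC A <> RtoC 0) by (intros E; apply Ha; injection E; auto).
  assert (HB : RtoC B <> RtoC 0) by (intros E; apply Hb; injection E; auto).
  (* u b is a positive multiple of a *)
  exists (a * Cconj b / (RtoC A * RtoC B))%C. split.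
  - rewrite Cmod_div by (apply Cmult_neq_0; assumption).
    rewrite !Cmod_mult, Cmod_conj, !Cmod_R, !Rabs_pos_eq by lra. fold A B. field. lra.
  - assert (Hbb : (Cconj b * b)%C = (RtoC B * RtoC B)%C).
    { unfold B. rewrite Cmult_comm, <- Cmod2_conj, RtoC_pow. simpl. ring. }
    replace (a + a * Cconj b / (RtoC A * RtoC B) * b)%C with (a * RtoC ((A + B) / A))%C.
    + rewrite Cmod_mult, Cmod_R, Rabs_pos_eq.
      * fold A. field. exact Ha.
      * apply Rmult_le_pos; [lra | apply Rlt_le, Rinv_0_lt_compat; lra].
    + rewrite RtoC_div, RtoC_plus by exact Ha.
      transitivity (a + a * (Cconj b * b) / (RtoC A * RtoC B))%C; [|field; split; assumption].
      rewrite Hbb. field. split; assumption.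
Qed.

(* the coefficient of z^m in F' + alpha z F'' when F = sum c_n z^n *)
Definition W_coef (alpha : R) (c : nat -> C) (m : nat) : C :=
  (RtoC (INR (S m) * (1 + alpha * INR m)) * c (S m))%C.

Lemma inD_of_Cmod z : Cmod z < 1 -> inD z.
Proof. unfold inD. rewrite Cmod_Cnorm. exact (fun H => H). Qed.

Lemma is_cpseries_W_coef alpha c F F1 F2 z :
  (forall w, inD w -> Cseries c w (F w)) ->
  (forall w, inD w -> cderiv F w (F1 w) /\ cderiv F1 w (F2 w)) ->
  Cmod z < 1 ->
  is_cpseries (W_coef alpha c) z (F1 z + RtoC alpha * (z * F2 z))%C.
Proof.
  intros HF Hd Hz.
  assert (H1 : forall w, Cmod w < 1 -> is_cpseries (fun m => RtoC (INR (S m)) * c (S m))%C w (F1 w)).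
  { intros w Hw. apply (is_cpseries_deriv c F); [| exact Hw | apply Hd, inD_of_Cmod, Hw].
    intros v Hv. apply Cseries_is_cpseries, HF, inD_of_Cmod, Hv. }
  pose proof (is_cpseries_deriv _ F1 z (F2 z) H1 Hz (proj2 (Hd z (inD_of_Cmod z Hz)))) as H2.
  apply is_cpseries_shift, (is_cpseries_scal (RtoC alpha)) in H2.
  eapply is_cpseries_ext; [|exact (is_cpseries_plus _ _ _ _ _ (H1 z Hz) H2)].
  intros [|m]; unfold W_coef; rewrite !RtoC_mult, RtoC_plus, ?RtoC_mult; simpl INR; ring.
Qed.

Lemma Re_add_rotate_pos (H G u : C) beta :
  Cmod u = 1 -> Re H - beta > Cmod G -> 0 < Re (H + u * G + RtoC (- beta))%C.
Proof.
  intros Hu HG. pose proof (Re_bounds (u * G)%C) as HuG. rewrite Cmod_mult, Hu, Rmult_1_l in HuG.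
  replace (Re (H + u * G + RtoC (- beta))%C) with (Re H + Re (u * G)%C - beta)
    by (unfold Re; simpl; ring).
  lra.
Qed.

Lemma W_H0_coef_sum_bound alpha beta (a b : nat -> C) h g n :
  a 1%nat = (1, 0) -> b 1%nat = (0, 0) ->
  (forall z, inD z -> Cseries a z (h z)) -> (forall z, inD z -> Cseries b z (g z)) ->
  W_H0 alpha beta h g -> (2 <= n)%nat ->
  Rabs (INR n * (1 + alpha * (INR n - 1))) * (Cmod (a n) + Cmod (b n)) <= 2 * (1 - beta).
Proof.
  intros Ha1 Hb1 Hh Hg [h1 [h2 [g1 [g2 HW]]]] Hn.
  assert (HA : forall z, Cmod z < 1 ->
            is_cpseries (W_coef alpha a) z (h1 z + RtoC alpha * (z * h2 z))%C).
  { intros z. apply (is_cpseries_W_coef alpha a h h1 h2 z Hh). intros w Hw.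
    destruct (HW w Hw) as (? & ? & _). split; assumption. }
  assert (HB : forall z, Cmod z < 1 ->
            is_cpseries (W_coef alpha b) z (g1 z + RtoC alpha * (z * g2 z))%C).
  { intros z. apply (is_cpseries_W_coef alpha b g g1 g2 z Hg). intros w Hw.
    destruct (HW w Hw) as (_ & _ & ? & ? & _). split; assumption. }
  destruct (Cmod_add_rotate (a n) (b n)) as [u [Hu Hab]].
  set (e := fun m => (W_coef alpha a m + u * W_coef alpha b m
                      + match m with O => RtoC (- beta) | S _ => 0 end)%C).
  set (q := fun z => (h1 z + RtoC alpha * (z * h2 z) + u * (g1 z + RtoC alpha * (z * g2 z))
                      + RtoC (- beta))%C).
  assert (Hq : forall z, Cmod z < 1 -> is_cpseries e z (q z)).
  { intros z Hz. apply is_cpseries_plus; [apply is_cpseries_plus|].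
    - apply HA, Hz.
    - apply is_cpseries_scal, HB, Hz.
    - apply is_cpseries_const. }
  assert (Hpos : forall z, Cmod z < 1 -> 0 < Re (q z)).
  { intros z Hz. destruct (HW z (inD_of_Cmod z Hz)) as (_ & _ & _ & _ & Hineq).
    rewrite Cmod_Cnorm in Hineq. apply Re_add_rotate_pos; assumption. }
  pose proof (caratheodory_coef_bound e q Hq Hpos (n - 1) ltac:(lia)) as Hc.
  assert (E0 : e 0%nat = RtoC (1 - beta)).
  { unfold e, W_coef. rewrite Ha1, Hb1. apply injective_projections; simpl; ring. }
  assert (En : e (n - 1)%nat = (RtoC (INR n * (1 + alpha * (INR n - 1))) * (a n + u * b n))%C).
  { destruct n as [|[|k]]; [lia | lia |]. replace (S (S k) - 1)%nat with (S k) by lia.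
    unfold e, W_coef. rewrite (S_INR (S k)).
    replace (INR (S k) + 1 - 1) with (INR (S k)) by ring. ring. }
  rewrite En, Cmod_mult, Cmod_R, Hab, E0 in Hc. simpl in Hc. exact Hc.
Qed.

Theorem theorem3p2 (alpha beta : R) (a b : nat -> Cplx) (h g : Cplx -> Cplx)
  (Halpha : 0 <= alpha) (Hbeta : 0 <= beta < 1)
  (Ha0 : a 0%nat = (0, 0)) (Ha1 : a 1%nat = (1, 0))
  (Hb0 : b 0%nat = (0, 0)) (Hb1 : b 1%nat = (0, 0))
  (Hh : forall z, inD z -> Cseries a z (h z))
  (Hg : forall z, inD z -> Cseries b z (g z))
  (HW : W_H0 alpha beta h g) :
  forall n : nat, (2 <= n)%nat ->
    let bound := 2 * (1 - beta) / (INR n * (1 + alpha * (INR n - 1))) in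
    Cnorm (a n) + Cnorm (b n) <= bound /\
    Rabs (Cnorm (a n) - Cnorm (b n)) <= bound /\
    Cnorm (a n) <= bound.
Proof.
  intros n Hn bound.
  pose proof (W_H0_coef_sum_bound alpha beta a b h g n Ha1 Hb1 Hh Hg HW Hn) as Hsum.
  assert (Hfac : 0 < INR n * (1 + alpha * (INR n - 1))).
  { pose proof (le_INR 2 n Hn) as H2. simpl INR in H2.
    assert (1 <= 1 + alpha * (INR n - 1)) by nra. nra. }
  rewrite Rabs_pos_eq in Hsum by lra.
  rewrite !Cmod_Cnorm. pose proof (Cmod_ge_0 (a n)). pose proof (Cmod_ge_0 (b n)).
  set (F := INR n * (1 + alpha * (INR n - 1))) in *.
  assert (Hi : Cmod (a n) + Cmod (b n) <= bound).
  { unfold bound. apply (Rmult_le_reg_l F); [exact Hfac|].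
    replace (F * (2 * (1 - beta) / F)) with (2 * (1 - beta)) by (field; lra). lra. }
  split; [exact Hi|]. split; [apply Rabs_le; lra | lra].
Qed.
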